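(* Let $k\ge 4$ and let $f,\tilde f$ be CNF formulas whose literal-clause graphs with negation connections $\mathrm{LCN}(f)$ and $\mathrm{LCN}(\tilde f)$ are indistinguishable by the $k$-WL test. Then for every partial assignment $\sigma$ of the variables of $f$ that sets at most $\lfloor k/2\rfloor-1$ variables, there exists a partial assignment $\tilde\sigma$ of the variables of $\tilde f$ such that $\mathrm{LCN}(\sigma(f))$ and $\mathrm{LCN}(\tilde\sigma(\tilde f))$ are indistinguishable by the (1-dimensional) WL test.
   Context: Literals, clauses (sets of literals, read as disjunctions) and CNF formulas (sets of clauses, read as conjunctions) are as usual. For a CNF formula $f$ on variables $x_1,\dots,x_n$, $\mathrm{LCN}(f)$ is the edge-colored graph whose vertices are the $2n$ literals $x_i,\neg x_i$ and one vertex per clause, with a ''literal-clause'' colored edge $\{\ell,c\}$ whenever $\ell\in c$ and a differently colored ''literal-literal'' edge $\{x_i,\neg x_i\}$ for each $i$; vertices carry no labels. For a partial assignment $\sigma$, $\mathrm{LCN}(\sigma(f))$ is $\mathrm{LCN}(f)$ in which each literal vertex set to true by $\sigma$ receives the vertex label $\top$, each literal set to false receives the label $\bot$, and all other vertices carry a common default label. WL test (with vertex and edge colors): $\chi^0$ is the vertex labeling; $\chi^\ell(v)=(\chi^{\ell-1}(v),(\{\!\{\chi^{\ell-1}(w):w\in N_c(v)\}\!\})_{c})$, where $N_c(v)$ is the set of neighbors of $v$ via edges of color $c$, iterated until the partition stabilizes; it is run on the disjoint union of two graphs, and they are distinguished iff some color occurs a different number of times among the vertices of the two graphs. $k$-WL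 test: the atomic type of $\bar v\in V(G)^k$ is determined by the colored induced subgraph on its entries (tuples have equal type iff $v_i\mapsto u_i$ is an isomorphism of the colored induced subgraphs); $\chi^0(\bar v)$ is the atomic type and $\chi^\ell(\bar v)=(\chi^{\ell-1}(\bar v),\chi^{\ell-1}_1(\bar v),\dots,\chi^{\ell-1}_k(\bar v))$ with $\chi^{\ell-1}_i(\bar v)=\{\!\{\chi^{\ell-1}(v_1,..,v_{i-1},u,v_{i+1},..,v_k):u\in V\}\!\}$, until stable; run on the disjoint union, two graphs are distinguished iff some color class has different numbers of tuples from the two graphs. *)

From mathcomp Require Import all_boot.
Set Implicit Arguments. Unset Strict Implicit. Unset Printing Implicit Defensive.

Record cgraph (C : finType) := CGraph {
  vert : finType;
  vlab : vert -> nat;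
  edge : C -> rel vert }.

Definition gunion (C : finType) (G1 G2 : cgraph C) : cgraph C :=
  @CGraph C (vert G1 + vert G2)%type
    (fun v => match v with inl x => vlab x | inr y => vlab y end)
    (fun c v w => match v, w with
                  | inl x, inl y => @edge C G1 c x y
                  | inr x, inr y => @edge C G2 c x y
                  | _, _ => false end).

(* 1-WL (colour refinement).  [wl_eq G l v w] holds iff chi^l(v) = chi^l(w). *)
(* chi^{l+1}(v) = (chi^l(v), (multiset of chi^l over N_c(v))_c); two          *)
(* multisets of colours agree iff for every colour class (represented by u)   *)
(* the numbers of elements in that class agree.                              *)
Fixpoint wl_eq (C : finType) (G : cgraph C) (l : nat) : rel (vert G) :=
  match l with
  | 0 => fun v w => vlab v == vlab w
  | l'.+1 => fun v w =>
      @wl_eq C G l' v w &&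
      [forall c : C, forall u : vert G,
         #|[set x | @edge C G c v x & @wl_eq C G l' x u]|
         == #|[set x | @edge C G c w x & @wl_eq C G l' x u]|]
  end.

Definition wl_stable (C : finType) (G : cgraph C) (l : nat) : Prop :=
  forall v w : vert G, @wl_eq C G l v w = @wl_eq C G l.+1 v w.

Definition wl_distinguished (C : finType) (G1 G2 : cgraph C) : Prop :=
  exists l, wl_stable (gunion G1 G2) l /\
    exists u : vert (gunion G1 G2),
      #|[set x : vert G1 | @wl_eq C (gunion G1 G2) l (inl x) u]|
      != #|[set y : vert G2 | @wl_eq C (gunion G1 G2) l (inr y) u]|.

Definition ktuple (k : nat) (V : finType) := {ffun 'I_k -> V}.

Definition tsubst (k : nat) (V : finType) (t : ktuple k V) (i : 'I_k) (x : V)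
  : ktuple k V := [ffun j => if j == i then x else t j].

(* equal atomic types: v_i |-> u_i is an isomorphism of the coloured induced *)
(* subgraphs (well defined and injective, preserves labels and edge colours) *)
Definition atp_eq (C : finType) (G : cgraph C) (k : nat)
  (t s : ktuple k (vert G)) : bool :=
  [forall i, forall j,
     ((t i == t j) == (s i == s j)) &&
     (vlab (t i) == vlab (s i)) &&
     [forall c : C, @edge C G c (t i) (t j) == @edge C G c (s i) (s j)]].

Fixpoint kwl_eq (C : finType) (G : cgraph C) (k : nat) (l : nat)
  : rel (ktuple k (vert G)) :=
  match l with
  | 0 => fun t s => atp_eq t s
  | l'.+1 => fun t s =>
      @kwl_eq C G k l' t s &&
      [forall i : 'I_k, forall u : ktuple k (vert G),
         #|[set x | @kwl_eq C G k l' (tsubst t i x) u]|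
         == #|[set x | @kwl_eq C G k l' (tsubst s i x) u]|]
  end.

Definition kwl_stable (C : finType) (G : cgraph C) (k l : nat) : Prop :=
  forall t s : ktuple k (vert G), @kwl_eq C G k l t s = @kwl_eq C G k l.+1 t s.

Definition inl_tuple (k : nat) (V1 V2 : finType) (t : ktuple k V1)
  : ktuple k (V1 + V2)%type := [ffun i => inl (t i)].
Definition inr_tuple (k : nat) (V1 V2 : finType) (t : ktuple k V2)
  : ktuple k (V1 + V2)%type := [ffun i => inr (t i)].

Definition kwl_distinguished (C : finType) (k : nat) (G1 G2 : cgraph C) : Prop :=
  exists l, kwl_stable (gunion G1 G2) k l /\
    exists u : ktuple k (vert (gunion G1 G2)),
      #|[set t : ktuple k (vert G1) |
          @kwl_eq C (gunion G1 G2) k l (inl_tuple (vert G2) t) u]|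
      != #|[set t : ktuple k (vert G2) |
          @kwl_eq C (gunion G1 G2) k l (inr_tuple (vert G1) t) u]|.

(* Literal (i, true) is x_i, literal (i, false) is the negation of x_i.      *)
Definition lit (n : nat) := ('I_n * bool)%type.
Definition clause (n : nat) := {set lit n}.
Definition cnf (n : nat) := {set clause n}.

(* partial assignment: None = unset *)
Definition passign (n : nat) := {ffun 'I_n -> option bool}.

Definition assigned (n : nat) (s : passign n) : {set 'I_n} :=
  [set i | s i != None].

Definition lcn_vert (n : nat) (f : cnf n) : finType :=
  (lit n + {c : clause n | c \in f})%type.

(* edge colour true: literal-clause; false: literal-literal *)
Definition lcn_edge (n : nat) (f : cnf n) (c : bool) : rel (lcn_vert f) :=
  fun v w =>
    match v, w with
    | inl l, inr cl => c && (l \in val cl)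
    | inr cl, inl l => c && (l \in val cl)
    | inl (i, b), inl (j, b') => ~~ c && (i == j) && (b != b')
    | _, _ => false
    end.

Definition lab_default := 0.
Definition lab_top := 1.
Definition lab_bot := 2.

Definition lcn_lab (n : nat) (f : cnf n) (s : passign n) (v : lcn_vert f) : nat :=
  match v with
  | inl (i, b) => if s i == Some b then lab_top
                  else if s i == Some (~~ b) then lab_bot
                  else lab_default
  | inr _ => lab_default
  end.

Definition LCN (n : nat) (f : cnf n) : cgraph bool :=
  @CGraph bool (lcn_vert f) (fun _ => lab_default) (@lcn_edge n f).

Definition LCNa (n : nat) (f : cnf n) (s : passign n) : cgraph bool :=
  @CGraph bool (lcn_vert f) (@lcn_lab n f s) (@lcn_edge n f).

From mathcomp Require Import all_boot zify.
Set Implicit Arguments. Unset Strict Implicit. Unset Printing Implicit Defensive.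

(* Fix a round L at which k-WL is stable on LCN(f) + LCN(g).  Put pebbles 2q
   and 2q+1 on the literal that sigma sets true and on its negation; by balance
   some tuple of LCN(g) has the same k-WL colour, and since negation edges belong
   to the atomic type it again encodes a partial assignment tau.  It remains to
   see that individualising these p <= k-2 pebbled vertices keeps the graphs
   1-WL equivalent.  Whether a vertex z is connected to a pebble is visible to
   k-WL once k >= 3.  A connected z is represented by the tuple keeping the
   pebbles and putting z on the k-p >= 2 free positions, any other z by the
   constant tuple z...z.  Moving one free position to a neighbour of z turns
   the representative of z into that of the neighbour, so vertices with k-WL
   equivalent representatives are 1-WL equivalent; and the stable k-WL counts
   transfer to counts of 1-WL classes, with the connectivity test keeping
   pebbled tuples from mixing the two graphs. *)

(** * Counting along equivalence classes *)

Definition class_invariant (X : Type) (r : rel X) (Q : pred X) : Prop :=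
  forall x y, r x y -> Q x = Q y.

Lemma card_inl_inr (A B : finType) (h : pred (A + B)) :
  #|[set z | h z]| = #|[set x | h (inl x)]| + #|[set y | h (inr y)]|.
Proof. by rewrite -!sum1dep_card big_sumType. Qed.

Lemma card_split (A : finType) (c h : pred A) :
  #|[set a | h a]| = #|[set a | c a && h a]| + #|[set a | ~~ c a && h a]|.
Proof.
rewrite -(cardsID [set a | c a]); congr (_ + _).
all: by apply: eq_card => a; rewrite !inE // andbC.
Qed.

Section ClassCounting.
Variables (X : finType) (r : rel X).
Hypotheses (r_refl : reflexive r) (r_ltrans : left_transitive r).

Lemma card_class_split (A : finType) (phi : A -> X) (Q : pred X) u :
  class_invariant r Q -> Q u ->
  #|[set a | Q (phi a)]| =
  #|[set a | r (phi a) u]| + #|[set a | Q (phi a) && ~~ r (phi a) u]|.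
Proof.
move=> Qinv Qu; rewrite -(cardsID [set a | r (phi a) u]); congr (_ + _).
all: apply: eq_card => a; rewrite !inE andbC //.
by case ru: (r _ u); rewrite ?andbT ?(Qinv _ _ ru).
Qed.

(* Induct on the number of points satisfying [Q], peeling off one class. *)
Lemma card_class_transfer (A B : finType) (phi : A -> X) (psi : B -> X) :
  (forall u, #|[set a | r (phi a) u]| = #|[set b | r (psi b) u]|) ->
  forall Q : pred X, class_invariant r Q ->
  #|[set a | Q (phi a)]| = #|[set b | Q (psi b)]|.
Proof.
move=> Hcls Q; move: {2}#|_| (leqnn #|[set x | Q x]|) => N.
elim: N Q => [|N IH] Q szQ Qinv.
  have Q0 x : Q x = false.
    by apply: contraTF szQ => Qx; rewrite -ltnNge; apply/card_gt0P; exists x; rewrite inE.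
  by rewrite !eq_card0 // => x; rewrite inE Q0.
have [u Qu|Q0] := pickP Q; last by rewrite !eq_card0 // => x; rewrite inE Q0.
pose Q' x := Q x && ~~ r x u.
have Q'inv : class_invariant r Q'.
  by move=> x y rxy; rewrite /Q' (Qinv _ _ rxy) (r_ltrans rxy).
have szQ' : #|[set x | Q' x]| <= N.
  have := card_class_split id Qinv Qu; rewrite -/Q'.
  have : 0 < #|[set x | r x u]| by apply/card_gt0P; exists u; rewrite inE.
  lia.
rewrite (card_class_split phi Qinv Qu) (card_class_split psi Qinv Qu) Hcls.
by rewrite (IH Q' szQ' Q'inv).
Qed.

End ClassCounting.

(** * Stable k-WL equivalence *)

Section KWL.
Variables (C : finType) (G : cgraph C) (k : nat).
Local Notation V := (vert G).
Local Notation Tup := (ktuple k V).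
Local Notation R := (@kwl_eq C G k).

Lemma atp_eqP (t s : Tup) : atp_eq t s -> forall i j,
  (t i == t j) = (s i == s j) /\ forall c, edge c (t i) (t j) = edge c (s i) (s j).
Proof.
move=> /forallP H i j; have /forallP/(_ j)/andP[/andP[/eqP -> _] /forallP He] := H i.
by split=> // c; apply/eqP.
Qed.

Lemma atp_eq_refl : reflexive (@atp_eq C G k).
Proof.
move=> t; apply/forallP=> i; apply/forallP=> j; rewrite !eqxx.
by apply/forallP=> c.
Qed.

Lemma atp_eq_sym : symmetric (@atp_eq C G k).
Proof.
suff sym (t s : Tup) : atp_eq t s -> atp_eq s t.
  by move=> t s; apply/idP/idP; apply: sym.
move=> /forallP H; apply/forallP=> i; apply/forallP=> j.
have /forallP/(_ j)/andP[/andP[/eqP-> /eqP->] /forallP He] := H i.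
by rewrite !eqxx; apply/forallP=> c; rewrite eq_sym He.
Qed.

Lemma atp_eq_trans : transitive (@atp_eq C G k).
Proof.
move=> s t w /forallP H /forallP H'; apply/forallP=> i; apply/forallP=> j.
have /forallP/(_ j)/andP[/andP[/eqP-> /eqP->] /forallP He] := H i.
have /forallP/(_ j)/andP[/andP[/eqP-> /eqP->] /forallP He'] := H' i.
by rewrite !eqxx; apply/forallP=> c; rewrite (eqP (He c)) He'.
Qed.

Lemma kwl_eq_refl l : reflexive (R l).
Proof.
elim: l => [|l IH] t /=; first exact: atp_eq_refl.
by rewrite IH; apply/forallP=> i; apply/forallP=> u.
Qed.

Lemma kwl_eq_sym l : symmetric (R l).
Proof.
elim: l => [|l IH] t s /=; first exact: atp_eq_sym.
rewrite IH; congr (_ && _); apply: eq_forallb => i; apply: eq_forallb => u.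
exact: eq_sym.
Qed.

Lemma kwl_eq_trans l : transitive (R l).
Proof.
elim: l => [|l IH] s t w /=; first exact: atp_eq_trans.
move=> /andP[Rts /forallP H] /andP[Rsw /forallP H']; rewrite (IH _ _ _ Rts Rsw) /=.
apply/forallP=> i; apply/forallP=> u.
by rewrite (eqP (forallP (H i) u)); apply: (forallP (H' i)).
Qed.

Lemma kwl_eq_ltrans l : left_transitive (R l).
Proof. exact: sym_left_transitive (@kwl_eq_sym l) (@kwl_eq_trans l). Qed.

Lemma kwl_eq_atp l (t s : Tup) : R l t s -> atp_eq t s.
Proof. by elim: l => [|l IH] //= /andP[/IH]. Qed.

(* The number of pairs of equivalent tuples decreases until it stabilises. *)
Lemma kwl_stable_exists : exists L, kwl_stable G k L.
Proof.
pose npairs l := #|[set p : Tup * Tup | R l p.1 p.2]|.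
have sub l : [set p : Tup * Tup | R l.+1 p.1 p.2] \subset [set p | R l p.1 p.2].
  by apply/subsetP=> -[t s]; rewrite !inE => /andP[].
suff [L HL] : exists L, npairs L.+1 = npairs L.
  exists L => t s; apply/idP/idP=> [Rts|/andP[] //].
  have /eqP/setP/(_ (t, s)) : [set p : Tup * Tup | R L.+1 p.1 p.2] == [set p | R L p.1 p.2].
    by rewrite eqEcard sub; exact: eq_leq (esym HL).
  by rewrite !inE /= Rts.
have dec l : npairs l.+1 <= npairs l by apply: subset_leq_card.
have [L /eqP HL|none] := pickP (fun L : 'I_(npairs 0).+1 => npairs L.+1 == npairs L).
  by exists L.
have bound l : l <= (npairs 0).+1 -> npairs l + l <= npairs 0.
  elim: l => [|l IH] lt; first by rewrite addn0.
  by have := none (Ordinal lt); have := dec l; have := IH (ltnW lt); rewrite /=; lia.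
by have := bound _ (leqnn _); lia.
Qed.

Lemma tsubst_id (t : Tup) i : tsubst t i (t i) = t.
Proof. by apply/ffunP=> j; rewrite ffunE; case: eqP => [->|]. Qed.

Lemma exists_third_index (i j : 'I_k) : 3 <= k ->
  exists m : 'I_k, (m != i) && (m != j).
Proof.
move=> k3; have : 0 < #|~: [set i; j]|.
  by have := cardsC [set i; j]; rewrite cards2 card_ord; case: (i != j) => /=; lia.
by case/card_gt0P=> m; rewrite !inE negb_or; exists m.
Qed.

Section Stable.
Variable L : nat.
Hypothesis HL : kwl_stable G k L.

Lemma card_tsubst_transfer (t s : Tup) i (Q : pred Tup) :
  class_invariant (R L) Q -> R L t s ->
  #|[set x | Q (tsubst t i x)]| = #|[set x | Q (tsubst s i x)]|.
Proof.
move=> Qinv; rewrite HL => /andP[_ /forallP counts].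
apply: (card_class_transfer (@kwl_eq_refl L) (@kwl_eq_ltrans L)) Qinv => u.
exact/eqP/(forallP (counts i)).
Qed.

Lemma exists_tsubst_transfer (t s : Tup) i (Q : pred Tup) :
  class_invariant (R L) Q -> R L t s ->
  (exists x, Q (tsubst t i x)) -> exists x, Q (tsubst s i x).
Proof.
move=> Qinv Rts [x Qx]; have : 0 < #|[set x | Q (tsubst t i x)]|.
  by apply/card_gt0P; exists x; rewrite inE.
by rewrite (card_tsubst_transfer i Qinv Rts) => /card_gt0P[y]; rewrite inE; exists y.
Qed.

Lemma kwl_stable_copy (t s : Tup) i j :
  R L t s -> R L (tsubst t i (t j)) (tsubst s i (s j)).
Proof.
move=> Rts; have [<-|nij] := eqVneq i j; first by rewrite !tsubst_id.
pose Q w := R L w (tsubst t i (t j)).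
have Qinv : class_invariant (R L) Q by move=> w w' /kwl_eq_ltrans; apply.
have [x Rx] := exists_tsubst_transfer (i := i) Qinv Rts (ex_intro _ (t j) (kwl_eq_refl _ _)).
have [+ _] := atp_eqP (kwl_eq_atp Rx) i j.
rewrite !ffunE eqxx [j == i]eq_sym (negbTE nij) eqxx => /eqP xE.
by rewrite -xE kwl_eq_sym.
Qed.

Definition overwrite (S : {set 'I_k}) (q : 'I_k) (t : Tup) : Tup :=
  [ffun i => if i \in S then t q else t i].

Lemma kwl_stable_overwrite (S : {set 'I_k}) q (t s : Tup) :
  q \notin S -> R L t s -> R L (overwrite S q t) (overwrite S q s).
Proof.
move=> + Rts; move: {2}#|S| (erefl #|S|) => N.
elim: N S => [|N IH] S szS qS.
  have S0 : S = set0 by apply/cards0_eq.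
  suff id w : overwrite S q w = w by rewrite !id.
  by apply/ffunP=> i; rewrite ffunE S0 inE.
have [i iS] : exists i, i \in S by apply/card_gt0P; rewrite szS.
have split w : overwrite S q w = tsubst (overwrite (S :\ i) q w) i (overwrite (S :\ i) q w q).
  apply/ffunP=> x; rewrite !ffunE !inE (negbTE qS) andbF.
  by case: eqVneq => [->|]; rewrite ?iS.
rewrite !split; apply: kwl_stable_copy; apply: IH; last by rewrite !inE (negbTE qS) andbF.
by move: szS; rewrite (cardsD1 i) iS => -[].
Qed.

Definition adj : rel V := fun x y => [exists c, edge c x y].

Fixpoint reach_within d (x y : V) : bool :=
  (x == y) || (if d is d'.+1 then [exists w, adj x w && reach_within d' w y] else false).

Lemma connect_reach_within x y : connect adj x y <-> exists d, reach_within d x y.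
Proof.
split=> [/connectP[pth] | [d]].
  elim: pth x => [|w pth IH] x /=; first by move=> _ ->; exists 0; rewrite /= eqxx.
  case/andP=> xw /IH /[apply] -[d wy]; exists d.+1; apply/orP; right.
  by apply/existsP; exists w; rewrite xw.
elim: d x => [|d IH] x /=; first by rewrite orbF => /eqP->.
case/orP=> [/eqP-> //|/existsP[w /andP[xw /IH]]].
exact/connect_trans/connect1.
Qed.

Lemma atp_eq_adj (t s : Tup) i j : atp_eq t s -> adj (t i) (t j) = adj (s i) (s j).
Proof. by case/atp_eqP/(_ i j) => _ E; apply: eq_existsb => c; rewrite E. Qed.

(* A path step from [t i] is guessed in a third position [m], so at least three
   positions are needed to express reachability. *)
Lemma kwl_stable_reach_within d (t s : Tup) i j : 3 <= k ->
  R L t s -> reach_within d (t i) (t j) = reach_within d (s i) (s j).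
Proof.
move=> k3; elim: d t s i j => [|d IH] t s i j Rts /=.
  by have [-> _] := atp_eqP (kwl_eq_atp Rts) i j.
have [-> _] := atp_eqP (kwl_eq_atp Rts) i j; congr (_ || _).
have [m /andP[mi mj]] := exists_third_index i j k3.
pose Q (w : Tup) := adj (w i) (w m) && reach_within d (w m) (w j).
have Qinv : class_invariant (R L) Q.
  by move=> w w' Rw; rewrite /Q (atp_eq_adj _ _ (kwl_eq_atp Rw)) (IH _ _ _ _ Rw).
have QE (w : Tup) :
    [exists x, adj (w i) x && reach_within d x (w j)] = [exists x, Q (tsubst w m x)].
  by apply: eq_existsb => x; rewrite /Q !ffunE eqxx ![_ == m]eq_sym (negbTE mi) (negbTE mj).
have Rst : R L s t by rewrite kwl_eq_sym.
by rewrite !QE; apply/existsP/existsP => -[x Qx];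
  [apply: exists_tsubst_transfer Qinv Rts _ | apply: exists_tsubst_transfer Qinv Rst _];
  exists x.
Qed.

Lemma kwl_stable_connect (t s : Tup) i j : 3 <= k ->
  R L t s -> connect adj (t i) (t j) = connect adj (s i) (s j).
Proof.
move=> k3 Rts; apply/idP/idP => /connect_reach_within[d reach];
  apply/connect_reach_within; exists d.
  by rewrite -(kwl_stable_reach_within _ _ _ k3 Rts).
by rewrite (kwl_stable_reach_within _ _ _ k3 Rts).
Qed.

End Stable.
End KWL.

Lemma kwl_balanced (C : finType) (G1 G2 : cgraph C) (k L : nat) :
  kwl_stable (gunion G1 G2) k L -> ~ kwl_distinguished k G1 G2 ->
  forall u, #|[set t | @kwl_eq C (gunion G1 G2) k L (inl_tuple (vert G2) t) u]| =
            #|[set t | @kwl_eq C (gunion G1 G2) k L (inr_tuple (vert G1) t) u]|.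
Proof.
move=> HL not_dist u; apply/eqP/negPn/negP => neq.
by apply: not_dist; exists L; split=> //; exists u.
Qed.

Lemma kwl_balanced_mate (C : finType) (G1 G2 : cgraph C) (k L : nat) :
  (forall u, #|[set t | @kwl_eq C (gunion G1 G2) k L (inl_tuple (vert G2) t) u]| =
             #|[set t | @kwl_eq C (gunion G1 G2) k L (inr_tuple (vert G1) t) u]|) ->
  forall t : ktuple k (vert G1),
  exists s, @kwl_eq C (gunion G1 G2) k L (inl_tuple _ t) (inr_tuple _ s).
Proof.
move=> balanced t.
have : 0 < #|[set s | @kwl_eq C (gunion G1 G2) k L (inr_tuple (vert G1) s) (inl_tuple _ t)]|.
  by rewrite -balanced; apply/card_gt0P; exists t; rewrite inE kwl_eq_refl.
by case/card_gt0P=> s; rewrite inE kwl_eq_sym; exists s.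
Qed.

Lemma atp_eq_inl_inr_edge (C : finType) (G1 G2 : cgraph C) (k : nat)
    (t : ktuple k (vert G1)) (s : ktuple k (vert G2)) :
  @atp_eq C (gunion G1 G2) k (inl_tuple _ t) (inr_tuple _ s) ->
  forall c i j, edge c (t i) (t j) = edge c (s i) (s j).
Proof. by move=> /atp_eqP atp c i j; have [_] := atp i j; move/(_ c); rewrite !ffunE. Qed.

(** * Individualising pebbled vertices *)

Lemma wl_eq_trans (C : finType) (G : cgraph C) l : transitive (@wl_eq C G l).
Proof.
elim: l => [|l IH] y x z /=; first by move=> /eqP-> /eqP->.
move=> /andP[Rxy /forallP H] /andP[Ryz /forallP H']; rewrite (IH _ _ _ Rxy Ryz) /=.
apply/forallP=> c; apply/forallP=> u.
by rewrite (eqP (forallP (H c) u)); apply: (forallP (H' c)).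
Qed.

Definition relabel (C : finType) (G : cgraph C) (lab : vert G -> nat) : cgraph C :=
  @CGraph C (vert G) lab (@edge C G).
Arguments relabel {C} G lab.

Definition pebbles (k p : nat) (V : finType) (B : ktuple k V) (z : V) : {set 'I_k} :=
  [set i : 'I_k | (i < p) && (B i == z)].

Lemma pebbles_inj (k p : nat) (V W : finType) (h : V -> W) (t : ktuple k V) x :
  injective h -> pebbles p [ffun i => h (t i)] (h x) = pebbles p t x.
Proof. by move=> inj_h; apply/setP=> i; rewrite !inE ffunE (inj_eq inj_h). Qed.

Lemma pebbles0 (k : nat) (V : finType) (t : ktuple k V) x : pebbles 0 t x = set0.
Proof. by apply/setP=> i; rewrite !inE. Qed.

Definition const_tuple (k : nat) (V : finType) (z : V) : ktuple k V := [ffun=> z].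

Definition is_inl (A B : Type) (z : A + B) : bool := if z is inl _ then true else false.

Lemma card_const_tuples (k : nat) (V : finType) (q : 'I_k) (h : pred V) :
  #|[set t : ktuple k V | [forall i, t i == t q] && h (t q)]| = #|[set x | h x]|.
Proof.
have -> : [set t : ktuple k V | [forall i, t i == t q] && h (t q)]
          = @const_tuple k V @: [set x | h x].
  apply/setP=> t; rewrite !inE; apply/andP/imsetP => [[/forallP tq ht]|[x hx ->]].
    by exists (t q); rewrite ?inE //; apply/ffunP=> i; rewrite ffunE; apply/eqP.
  rewrite inE in hx; rewrite /const_tuple !ffunE.
  by split=> //; apply/forallP=> i; rewrite !ffunE.
by apply: card_imset => x y /ffunP/(_ q); rewrite !ffunE.
Qed.

Section Individualization.
Variables (C : finType) (G1 G2 : cgraph C).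
Hypotheses (G1_sym : forall c, symmetric (@edge C G1 c))
           (G2_sym : forall c, symmetric (@edge C G2 c)).
Local Notation UG := (gunion G1 G2).
Local Notation Om := (vert UG).
Variables (k L : nat).
Local Notation Tup := (ktuple k Om).
Local Notation R := (@kwl_eq C UG k L).
Local Notation Cst := (@const_tuple k Om).
Hypotheses (HL : kwl_stable UG k L) (k3 : 3 <= k).
Hypothesis balanced : forall u,
  #|[set t | R (inl_tuple (vert G2) t) u]| = #|[set t | R (inr_tuple (vert G1) t) u]|.
Variables (p : nat) (j jj : 'I_k).
Hypotheses (njj : j != jj) (pj : p <= j) (pjj : p <= jj).
Variables (B1 B2 : Tup).
Hypotheses (RB : R B1 B2) (B1_inl : forall i : 'I_k, i < p -> is_inl (B1 i))
           (B2_inr : forall i : 'I_k, i < p -> ~~ is_inl (B2 i)).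

Lemma union_edge_sym c : symmetric (@edge C UG c).
Proof. by case=> [x|x] [y|y] //=; [apply: G1_sym | apply: G2_sym]. Qed.

Lemma connect_is_inl (x y : Om) : connect (@adj C UG) x y -> is_inl x = is_inl y.
Proof. by apply: closed_connect => -[z|z] [w|w] /existsP[c]. Qed.

Definition side_pebbles (z : Om) := if z is inl _ then B1 else B2.

Definition pin (b : Tup) (z : Om) : Tup := [ffun i : 'I_k => if i < p then b i else z].

Definition pinned (z : Om) := pin (side_pebbles z) z.

Definition attached_tuple (t : Tup) :=
  [exists i : 'I_k, (i < p) && connect (@adj C UG) (t i) (t j)].

Definition attached (z : Om) := attached_tuple (pinned z).

Definition rep (z : Om) := if attached z then pinned z else Cst z.

Definition rep_eq (z z' : Om) := (attached z == attached z') && R (rep z) (rep z').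

Lemma pinE b z i : pin b z i = if i < p then b i else z.
Proof. by rewrite ffunE. Qed.

Lemma pin_tail b z (i : 'I_k) : p <= i -> pin b z i = z.
Proof. by rewrite pinE ltnNge => ->. Qed.

Lemma pinned_j z : pinned z j = z.
Proof. exact: pin_tail. Qed.

Lemma rep_j z : rep z j = z.
Proof. by rewrite /rep; case: ifP => _; rewrite ?pinned_j ?ffunE. Qed.

Lemma attached_invariant : class_invariant R attached_tuple.
Proof.
by move=> t s Rts; apply: eq_existsb => i; rewrite (kwl_stable_connect HL i j k3 Rts).
Qed.

Definition copy_tail (q : 'I_k) (t : Tup) : Tup :=
  overwrite [set i : 'I_k | (p <= i) && (i != q)] q t.

Lemma kwl_copy_tail (q : 'I_k) (t s : Tup) : R t s -> R (copy_tail q t) (copy_tail q s).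
Proof. by apply: kwl_stable_overwrite; rewrite // inE eqxx andbF. Qed.

Lemma copy_tail_tsubst (q : 'I_k) (b : Tup) x : p <= q -> copy_tail q (tsubst b q x) = pin b x.
Proof.
move=> pq; apply/ffunP=> i; rewrite !ffunE inE eqxx.
by case: eqVneq => [->|_]; [rewrite ltnNge pq | case: ltnP].
Qed.

Lemma kwl_const (t s : Tup) (q : 'I_k) : R t s -> R (Cst (t q)) (Cst (s q)).
Proof.
have E (w : Tup) : overwrite [set i | i != q] q w = Cst (w q).
  by apply/ffunP=> i; rewrite !ffunE inE; case: eqVneq => [->|].
by move=> Rts; rewrite -!E; apply: kwl_stable_overwrite; rewrite // inE eqxx.
Qed.

Lemma card_pin_transfer (Q : pred Tup) : class_invariant R Q ->
  #|[set x | Q (pin B1 x)]| = #|[set x | Q (pin B2 x)]|.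
Proof.
move=> Qinv; have Qinv' : class_invariant R (Q \o copy_tail j).
  by move=> t s /(kwl_copy_tail j) /Qinv.
have E (b : Tup) : [set x | Q (pin b x)] = [set x | (Q \o copy_tail j) (tsubst b j x)].
  by apply/setP=> x; rewrite !inE /= copy_tail_tsubst.
by rewrite !E (card_tsubst_transfer HL j Qinv' RB).
Qed.

Lemma attached_pin_B1 z : attached_tuple (pin B1 z) -> is_inl z.
Proof.
case/existsP=> i /andP[ip]; rewrite pinE ip pin_tail // => /connect_is_inl <-.
exact: B1_inl.
Qed.

Lemma attached_pin_B2 z : attached_tuple (pin B2 z) -> ~~ is_inl z.
Proof.
case/existsP=> i /andP[ip]; rewrite pinE ip pin_tail // => /connect_is_inl <-.
exact: B2_inr.
Qed.

Lemma pin_same_side z x : is_inl x = is_inl z -> pin (side_pebbles z) x = pinned x.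
Proof. by case: z; case: x. Qed.

Lemma pin_pin (b : Tup) z x : pin (pin b z) x = pin b x.
Proof. by apply/ffunP=> i; rewrite !pinE; case: (i < p). Qed.

Lemma attached_edge c z x : edge c z x -> attached z = attached x.
Proof.
move=> zx; have side : is_inl x = is_inl z by case: z x zx => ? [].
rewrite /attached -(pin_same_side side) /pinned; apply: eq_existsb => i.
rewrite !pinE [j < p]ltnNge pj /=; case: (i < p) => //=.
have adj_zx : @adj C UG z x by apply/existsP; exists c.
have adj_xz : @adj C UG x z by apply/existsP; exists c; rewrite union_edge_sym.
apply/idP/idP => conn; apply: connect_trans conn _; exact: connect1.
Qed.

Lemma pebbles_detached z : ~~ attached z -> pebbles p (side_pebbles z) z = set0.
Proof.
move=> detached; apply/setP=> i; rewrite !inE; apply: contraNF detached => /andP[ip /eqP zi].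
by apply/existsP; exists i; rewrite ip pinE ip pin_tail // zi connect0.
Qed.

Lemma pebbles_pinned z :
  pebbles p (side_pebbles z) z = [set i : 'I_k | (i < p) && (pinned z i == pinned z j)].
Proof. by apply/setP=> i; rewrite !inE pinE pin_tail //; case: (i < p). Qed.

Definition step_rep (b : bool) (t : Tup) : Tup := if b then copy_tail jj t else Cst (t jj).

Lemma kwl_step_rep b (t s : Tup) : R t s -> R (step_rep b t) (step_rep b s).
Proof. by case: b => [/kwl_copy_tail | /kwl_const]; apply. Qed.

Lemma rep_edge c z x : edge c z x -> rep x = step_rep (attached z) (tsubst (rep z) jj x).
Proof.
move=> zx; have side : is_inl x = is_inl z by case: z x zx => ? [].
rewrite /rep /step_rep -(attached_edge zx); case: (attached z).
  by rewrite copy_tail_tsubst // pin_pin pin_same_side.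
by rewrite ffunE eqxx.
Qed.

Variable F : {set 'I_k} -> nat.
Variables (lab1 : vert G1 -> nat) (lab2 : vert G2 -> nat).
Hypotheses (lab1E : forall x, lab1 x = F (pebbles p B1 (inl x)))
           (lab2E : forall y, lab2 y = F (pebbles p B2 (inr y))).
Local Notation VG := (gunion (relabel G1 lab1) (relabel G2 lab2)).

Lemma vlab_pebbles (z : vert VG) : vlab z = F (pebbles p (side_pebbles z) z).
Proof. by case: z => x /=. Qed.

Lemma rep_eq_vlab z z' : rep_eq z z' -> @vlab C VG z = @vlab C VG z'.
Proof.
rewrite (vlab_pebbles z) (vlab_pebbles z') /rep_eq /rep.
case: (boolP (attached z)) => [az|dz] /andP[/eqP az' Rzz'].
  rewrite -az' in Rzz'; rewrite !pebbles_pinned; congr F; apply/setP=> i; rewrite !inE.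
  by have [-> _] := atp_eqP (kwl_eq_atp Rzz') i j.
by rewrite !pebbles_detached // -az'.
Qed.

(* Neighbourhoods of [z] are read off the tuple [rep z] by moving pebble [jj]. *)
Lemma rep_eq_wl_eq l z z' : rep_eq z z' -> @wl_eq C VG l z z'.
Proof.
elim: l z z' => [|l IH] z z' zz' /=; first by apply/eqP/rep_eq_vlab.
rewrite IH //=; apply/forallP=> c; apply/forallP=> u; apply/eqP.
move: zz' => /andP[/eqP az Rzz']; set b := attached z in az.
pose Q (t : Tup) := edge c (t j) (t jj) &&
  [exists y, (attached y == b) && R (step_rep b t) (rep y) && @wl_eq C VG l y u].
have Qinv : class_invariant R Q.
  move=> t s Rts; rewrite /Q; have [_ ->] := atp_eqP (kwl_eq_atp Rts) j jj.
  congr (_ && _); apply: eq_existsb => y.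
  by rewrite (kwl_eq_ltrans (kwl_step_rep b Rts)).
have nbhd w : attached w = b ->
    [set x | @edge C VG c w x && @wl_eq C VG l x u] = [set x | Q (tsubst (rep w) jj x)].
  move=> aw; apply/setP=> x; rewrite !inE /Q !ffunE eqxx (negbTE njj) rep_j.
  rewrite -[@edge C VG c w x]/(@edge C UG c w x).
  case wx: (@edge C UG c w x) => //=; rewrite -aw -(rep_edge wx) (attached_edge wx).
  apply/idP/existsP => [wl_xu | [y /andP[/andP[axy Rxy] wl_yu]]].
    by exists x; rewrite eqxx kwl_eq_refl.
  by apply: wl_eq_trans wl_yu; apply: IH; rewrite /rep_eq eq_sym axy.
by rewrite (nbhd z) // (nbhd z' (esym az)); exact: (card_tsubst_transfer HL jj Qinv Rzz').
Qed.

Lemma card_attached_transfer (Q : pred Tup) : class_invariant R Q ->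
  #|[set x | attached (inl x) && Q (pinned (inl x))]| =
  #|[set y | attached (inr y) && Q (pinned (inr y))]|.
Proof.
move=> Qinv; pose Q' t := attached_tuple t && Q t.
have Q'inv : class_invariant R Q'.
  by move=> t s Rts; rewrite /Q' (attached_invariant Rts) (Qinv _ _ Rts).
have := card_pin_transfer Q'inv; rewrite !card_inl_inr.
rewrite [X in _ + X = _]eq_card0 => [|y]; last first.
  by rewrite !inE; apply/negbTE/andP => -[/attached_pin_B1].
rewrite [X in _ = X + _]eq_card0 => [|x]; last first.
  by rewrite !inE; apply/negbTE/andP => -[/attached_pin_B2].
by rewrite addn0.
Qed.

Lemma card_attached_const_transfer (Q : pred Tup) : class_invariant R Q ->
  #|[set x | attached (inl x) && Q (Cst (inl x))]| =
  #|[set y | attached (inr y) && Q (Cst (inr y))]|.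
Proof.
move=> Qinv; have Q'inv : class_invariant R (fun t => Q (Cst (t j))).
  by move=> t s /(kwl_const j) /Qinv.
have E (A : finType) (h : A -> Om) :
    [set a | attached (h a) && Q (Cst (pinned (h a) j))] =
    [set a | attached (h a) && Q (Cst (h a))].
  by apply/setP=> a; rewrite !inE pinned_j.
by have := card_attached_transfer Q'inv; rewrite (E _ inl) (E _ inr).
Qed.

Lemma card_const_transfer (Q : pred Tup) : class_invariant R Q ->
  #|[set x | Q (Cst (inl x))]| = #|[set y | Q (Cst (inr y))]|.
Proof.
move=> Qinv; pose Q' (t : Tup) := [forall i, t i == t j] && Q (Cst (t j)).
have Q'inv : class_invariant R Q'.
  move=> t s Rts; congr (_ && _); last exact/Qinv/kwl_const.
  by apply: eq_forallb => i; have [-> _] := atp_eqP (kwl_eq_atp Rts) i j.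
have E (V : finType) (h : V -> Om) : injective h ->
    #|[set t : ktuple k V | Q' [ffun i => h (t i)]]| = #|[set x | Q (Cst (h x))]|.
  move=> inj_h; rewrite -(card_const_tuples j (fun x => Q (Cst (h x)))).
  apply: eq_card => t; rewrite !inE /Q' !ffunE; congr (_ && _).
  by apply: eq_forallb => i; rewrite !ffunE (inj_eq inj_h).
rewrite -(E _ inl) -?(E _ inr); [|exact: inr_inj|exact: inl_inj].
exact: (card_class_transfer (@kwl_eq_refl _ _ _ L) (@kwl_eq_ltrans _ _ _ L) balanced).
Qed.

Section WLClass.
Variable P : pred Om.
Hypothesis P_sat : forall z y, rep_eq z y -> P y -> P z.

Definition rep_class (b : bool) (t : Tup) :=
  [exists y, (attached y == b) && R t (rep y) && P y].

Lemma rep_class_invariant b : class_invariant R (rep_class b).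
Proof. by move=> t s Rts; apply: eq_existsb => y; rewrite (kwl_eq_ltrans Rts). Qed.

Lemma rep_class_rep z : rep_class (attached z) (rep z) = P z.
Proof.
apply/existsP/idP => [[y /andP[/andP[ay Rzy] Py]] | Pz].
  by apply: P_sat Py; rewrite /rep_eq eq_sym ay.
by exists z; rewrite eqxx kwl_eq_refl.
Qed.

(* Attached vertices are counted through [pinned], detached ones through
   constant tuples; the attached vertices of the second count are then removed. *)
Lemma card_wl_class_decomp (A : finType) (h : A -> Om) :
  #|[set a | P (h a)]| + #|[set a | attached (h a) && rep_class false (Cst (h a))]| =
  #|[set a | attached (h a) && rep_class true (pinned (h a))]| +
  #|[set a | rep_class false (Cst (h a))]|.
Proof.
rewrite (card_split (attached \o h) (P \o h)).
rewrite [X in _ = _ + X](card_split (attached \o h)) /=.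
have -> : #|[set a | attached (h a) && P (h a)]| =
          #|[set a | attached (h a) && rep_class true (pinned (h a))]|.
  apply: eq_card => a; rewrite !inE /=.
  by case: (boolP (attached (h a))) => // ah; rewrite -(rep_class_rep (h a)) /rep ah.
have -> : #|[set a | ~~ attached (h a) && P (h a)]| =
          #|[set a | ~~ attached (h a) && rep_class false (Cst (h a))]|.
  apply: eq_card => a; rewrite !inE /=.
  case: (boolP (attached (h a))) => //= dh.
  by rewrite -(rep_class_rep (h a)) /rep (negbTE dh).
by rewrite addnAC addnA.
Qed.

End WLClass.

Lemma individualized_not_wl_distinguished :
  ~ wl_distinguished (relabel G1 lab1) (relabel G2 lab2).
Proof.
move=> [l [_ [u /eqP []]]].
pose P (z : Om) := @wl_eq C VG l z u.
have P_sat z y : rep_eq z y -> P y -> P z by move/(rep_eq_wl_eq l); apply: wl_eq_trans.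
change (#|[set x | P (inl x)]| = #|[set y | P (inr y)]|).
have := card_wl_class_decomp P_sat inl; have := card_wl_class_decomp P_sat inr.
rewrite (card_attached_transfer (rep_class_invariant P true)).
rewrite (card_const_transfer (rep_class_invariant P false)).
rewrite (card_attached_const_transfer (rep_class_invariant P false)).
lia.
Qed.

End Individualization.

Lemma two_tail_indices (k p : nat) : p + 2 <= k ->
  exists j jj : 'I_k, [/\ j != jj, p <= j & p <= jj].
Proof.
move=> pk; have k1 : k.-1 < k by lia.
have k2 : k.-2 < k by lia.
exists (Ordinal k1), (Ordinal k2); split=> /=; try lia.
by apply/eqP => -[]; lia.
Qed.

(** * Pebbles encoding partial assignments *)

Lemma lcn_edge_sym (n : nat) (f : cnf n) c : symmetric (@lcn_edge n f c).
Proof.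
move=> [[i b]|cl] [[i' b']|cl'] //=.
by rewrite eq_sym; congr (_ && _); rewrite eq_sym.
Qed.

Lemma lcn_neg_edge (n : nat) (f : cnf n) (x y : lcn_vert f) :
  lcn_edge false x y -> exists w b, x = inl (w, b) /\ y = inl (w, ~~ b).
Proof.
case: x => [[w b]|cl]; case: y => [[w' b']|cl'] //= /andP[/eqP <-].
by case: b; case: b' => // _; exists w; eexists.
Qed.

Definition lit_lab (k : nat) (P : {set 'I_k}) : nat :=
  if [exists i in P, ~~ odd i] then lab_top
  else if [exists i in P, odd i] then lab_bot else lab_default.

Lemma lit_lab0 k : lit_lab (set0 : {set 'I_k}) = lab_default.
Proof. by rewrite /lit_lab !(introF existsP) // => -[i]; rewrite inE. Qed.

Lemma lcn_lab_unassigned (n : nat) (f : cnf n) (s : passign n) (x : lcn_vert f) :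
  assigned s = set0 -> lcn_lab s x = lab_default.
Proof.
move=> /setP s0; case: x => [[w b]|] //=.
by have := s0 w; rewrite !inE => /negbFE/eqP->.
Qed.

Section LCNPebbles.
Variables (n k p : nat) (f : cnf n).
Local Notation Tup := (ktuple k (lcn_vert f)).

(* Pebbles [2q] and [2q+1] sit on a literal that is set true and on its negation. *)
Definition neg_paired (s : Tup) := forall i i' : 'I_k,
  i < p -> ~~ odd i -> i' = i.+1 :> nat -> lcn_edge false (s i) (s i').

Definition even_unlinked (s : Tup) := forall i i' : 'I_k,
  i < p -> i' < p -> ~~ odd i -> ~~ odd i' -> ~~ lcn_edge false (s i) (s i').

Definition encodes (s : Tup) (rho : passign n) := forall w b,
  (rho w == Some b) = [exists i : 'I_k, (i < p) && ~~ odd i && (s i == inl (w, b))].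

Definition assign_of_pebbles (s : Tup) : passign n :=
  [ffun w => if [exists i : 'I_k, (i < p) && ~~ odd i && (s i == inl (w, true))] then Some true
             else if [exists i : 'I_k, (i < p) && ~~ odd i && (s i == inl (w, false))]
             then Some false else None].

Lemma assign_of_pebbles_encodes s : even_unlinked s -> encodes s (assign_of_pebbles s).
Proof.
move=> unlinked w b; rewrite ffunE.
case: b; first by case: ifP => // _; case: ifP.
case: ifP => [/existsP[i /andP[/andP[ip ei] /eqP si]] | _]; last by case: ifP.
apply/esym/negbTE/existsP => -[i' /andP[/andP[ip' ei'] /eqP si']].
by have := unlinked i i' ip ip' ei ei'; rewrite si si' /= eqxx.
Qed.

Hypotheses (p_even : ~~ odd p) (pk : p <= k).
Variable s : Tup.
Hypothesis paired : neg_paired s.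

Lemma neg_paired_odd (i : 'I_k) : i < p -> odd i ->
  exists2 i0 : 'I_k, i0 < p & ~~ odd i0 /\ i = i0.+1 :> nat.
Proof.
move=> ip oi; have lt : i.-1 < k by lia.
by exists (Ordinal lt) => /=; [|split]; lia.
Qed.

Lemma neg_paired_even (i : 'I_k) : i < p -> ~~ odd i -> exists i' : 'I_k, i' = i.+1 :> nat.
Proof.
move=> ip ei; have lt : i.+1 < k by lia.
by exists (Ordinal lt).
Qed.

Lemma pebble_on_literal (i : 'I_k) : i < p -> exists l, s i = inl l.
Proof.
move=> ip; case: (boolP (odd i)) => [oi | ei].
  have [i0 i0p [ei0 ii0]] := neg_paired_odd ip oi.
  by have /lcn_neg_edge[w [b [_ ->]]] := paired i0p ei0 ii0; eexists.
have [i' ii'] := neg_paired_even ip ei.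
by have /lcn_neg_edge[w [b [-> _]]] := paired ip ei ii'; eexists.
Qed.

Variable rho : passign n.
Hypothesis enc : encodes s rho.

Lemma encodes_neg w b :
  (rho w == Some (~~ b)) = [exists i : 'I_k, (i < p) && odd i && (s i == inl (w, b))].
Proof.
rewrite enc; apply/existsP/existsP => -[i /andP[/andP[ip oi] /eqP si]].
  have [i' ii'] := neg_paired_even ip oi; exists i'.
  have := paired ip oi ii'; rewrite si => /lcn_neg_edge[_ [_ [[<- <-] ->]]].
  by rewrite negbK eqxx andbT ii' /=; lia.
have [i0 i0p [ei0 ii0]] := neg_paired_odd ip oi; exists i0.
have := paired i0p ei0 ii0; rewrite si => /lcn_neg_edge[_ [b' [-> [<- eb]]]].
by rewrite eb negbK eqxx i0p ei0.
Qed.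

Lemma lcn_lab_pebbles x : lcn_lab rho x = lit_lab (pebbles p s x).
Proof.
rewrite /lit_lab; case: x => [[w b]|cl] /=.
  have E (o : pred nat) : [exists i in pebbles p s (inl (w, b)), o i] =
      [exists i : 'I_k, (i < p) && o i && (s i == inl (w, b))].
    by apply: eq_existsb => i; rewrite !inE andbAC.
  by rewrite (E (fun i => ~~ odd i)) (E odd) -enc -encodes_neg.
have nopeb i : i \in pebbles p s (inr cl) = false.
  by rewrite !inE; apply/negbTE; case: ltnP => //= /pebble_on_literal[l ->].
by rewrite !(introF existsP) // => -[i]; rewrite nopeb.
Qed.

End LCNPebbles.

Lemma assignment_pebbling (n k : nat) (f : cnf n) (sg : passign n) :
  let p := (#|assigned sg|).*2 in 0 < #|assigned sg| -> p <= k ->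
  exists t : ktuple k (lcn_vert f),
    [/\ neg_paired p t, even_unlinked p t & encodes p t sg].
Proof.
move=> p /card_gt0P[w0 _] pk; pose e := enum (assigned sg).
pose val w := odflt true (sg w).
pose var (i : nat) := nth w0 e i./2.
exists [ffun i : 'I_k => inl (var i, odd i (+) val (var i))]; split.
- move=> i i' _ ei ii'; rewrite !ffunE /= /var ii'.
  have -> : i.+1./2 = i./2 by rewrite -[i.+1./2]/(uphalf i) uphalf_half (negbTE ei).
  by rewrite eqxx /= (negbTE ei); case: (val _).
- move=> i i' _ _ ei ei'; rewrite !ffunE /= (negbTE ei) (negbTE ei') /=.
  by case: (eqVneq (var i) (var i')) => [->|] //=; rewrite eqxx.
have size_e : size e = #|assigned sg| by rewrite cardE.
move=> w b; rewrite /= in pk; apply/eqP/existsP => [sw | [i]].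
  have we : w \in e by rewrite mem_enum inE sw.
  have lt : (index w e).*2 < k by move: we; rewrite -index_mem size_e; lia.
  exists (Ordinal lt); rewrite /= ffunE odd_double /var doubleK nth_index //.
  by rewrite /val sw /p ltn_double -size_e index_mem we eqxx.
rewrite ffunE /= => /andP[/andP[ip /negbTE ei]] /eqP[<- <-]; rewrite ei /=.
have : var i \in assigned sg by rewrite -mem_enum mem_nth // size_e ltn_half_double.
by rewrite inE /val; case: (sg _).
Qed.

Section LCNPair.
Variables (k n m : nat) (f : cnf n) (g : cnf m).
Local Notation UG := (gunion (LCN f) (LCN g)).
Local Notation Tup := (ktuple k (vert UG)).
Variable L : nat.
Local Notation R := (@kwl_eq bool UG k L).
Hypotheses (HL : kwl_stable UG k L) (k3 : 3 <= k).
Hypothesis balanced : forall u,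
  #|[set t | R (inl_tuple (vert (LCN g)) t) u]| =
  #|[set t | R (inr_tuple (vert (LCN f)) t) u]|.

Lemma lcn_individualized (p : nat) (B1 B2 : Tup) (sg : passign n) (tau : passign m) :
  p + 2 <= k -> R B1 B2 ->
  (forall i : 'I_k, i < p -> is_inl (B1 i)) -> (forall i : 'I_k, i < p -> ~~ is_inl (B2 i)) ->
  (forall x, lcn_lab sg x = lit_lab (pebbles p B1 (inl x))) ->
  (forall y, lcn_lab tau y = lit_lab (pebbles p B2 (inr y))) ->
  ~ wl_distinguished (LCNa f sg) (LCNa g tau).
Proof.
move=> /two_tail_indices[j [jj [njj pj pjj]]] RB B1_inl B2_inr lab1E lab2E.
exact: (individualized_not_wl_distinguished (G1 := LCN f) (G2 := LCN g)
          (@lcn_edge_sym n f) (@lcn_edge_sym m g) HL k3 balanced njj pj pjj RB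
          B1_inl B2_inr lab1E lab2E).
Qed.

Lemma lcn_unassigned_indistinguishable (sg : passign n) :
  assigned sg = set0 -> ~ wl_distinguished (LCNa f sg) (LCNa g [ffun=> None]).
Proof.
move=> sg0 dist; have [_ [_ [z _]]] := dist; move: dist.
apply: (@lcn_individualized 0 (const_tuple k z) (const_tuple k z)) => //.
- by rewrite add0n ltnW.
- exact: kwl_eq_refl.
- by move=> x; rewrite pebbles0 lit_lab0 lcn_lab_unassigned.
- move=> y; rewrite pebbles0 lit_lab0 lcn_lab_unassigned //.
  by apply/setP=> w; rewrite !inE ffunE.
Qed.

Lemma lcn_assigned_indistinguishable (sg : passign n) :
  0 < #|assigned sg| -> (#|assigned sg|).*2 + 2 <= k ->
  exists tau, ~ wl_distinguished (LCNa f sg) (LCNa g tau).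
Proof.
set p := (#|assigned sg|).*2 => sg_gt0 pk.
have p_even : ~~ odd p by rewrite odd_double.
have pk' : p <= k by lia.
have [t0 [paired unlinked enc]] := assignment_pebbling f sg_gt0 pk'.
have [s0 Rs0] := kwl_balanced_mate balanced t0.
have edges i j : lcn_edge false (t0 i) (t0 j) = lcn_edge false (s0 i) (s0 j) :=
  atp_eq_inl_inr_edge (kwl_eq_atp Rs0) false i j.
have paired' : neg_paired p s0 by move=> i i' ip ei ii'; rewrite -edges; apply: paired.
have unlinked' : even_unlinked p s0.
  by move=> i i' ip ip' ei ei'; rewrite -edges; apply: unlinked.
exists (assign_of_pebbles p s0).
apply: (lcn_individualized pk Rs0) => [i _|i _|x|y]; rewrite ?ffunE //.
  by rewrite pebbles_inj; [apply: (lcn_lab_pebbles p_even pk' paired enc) | exact: inl_inj].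
rewrite pebbles_inj; last exact: inr_inj.
apply: (lcn_lab_pebbles p_even pk' paired' (assign_of_pebbles_encodes unlinked')).
Qed.

End LCNPair.

Theorem lemma1 (k n m : nat) (f : cnf n) (g : cnf m) :
  4 <= k ->
  ~ kwl_distinguished k (LCN f) (LCN g) ->
  forall sigma : passign n,
    #|assigned sigma| <= k./2 - 1 ->
    exists tau : passign m, ~ wl_distinguished (LCNa f sigma) (LCNa g tau).
Proof.
move=> k4 not_dist sg small.
have [L HL] := kwl_stable_exists (gunion (LCN f) (LCN g)) k.
have balanced := kwl_balanced HL not_dist.
have k3 : 3 <= k by lia.
have [/cards0_eq sg0 | sg_gt0] := posnP #|assigned sg|.
  by exists [ffun=> None]; apply: lcn_unassigned_indistinguishable.
by apply: lcn_assigned_indistinguishable => //; lia.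
Qed.
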